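(* Let $G=(V,E)$ be a finite graph in which each edge carries one of the four decorations $(+,o),(+,s),(-,o),(-,s)$. Let $H$ be the $2$-cover of $G$ encoded by the signs, and decorate each edge of $H$ with the letter ($o$ or $s$) of the edge of $G$ it lies over. For $B\subseteq E$ let $\overline{B}$ denote the graph $(V,B)$ in which each edge with a $-$ sign has its letter swapped ($o\leftrightarrow s$) while edges with a $+$ sign keep their letter; for $A\subseteq E$ the graph $(V,A)$ keeps the original letters. Then the numbers of balanced factorientations satisfy $$g(H)=\sum_{A\subseteq E}g(A)\,g\big(\overline{E\setminus A}\big).$$
   Context: The $2$-cover encoded by the signs has vertex set $V\times\{0,1\}$; an edge $uv$ with sign $+$ lifts to the edges $(u,0)(v,0),(u,1)(v,1)$, and an edge with sign $-$ lifts to $(u,0)(v,1),(u,1)(v,0)$. Given a graph $F$ whose edges are each labelled $o$ or $s$, a factorientation consists of orienting every $o$-edge and deciding for every $s$-edge whether it is in a subgraph or not. The mixed degree of a vertex $v$ is the number of $o$-edges oriented towards $v$ plus the number of selected $s$-edges incident to $v$. The factorientation is balanced if every vertex $v$ has mixed degree $d_F(v)/2$, where $d_F(v)$ is the degree of $v$ in $F$. $g(F)$ denotes the number of balanced factorientations of $F$ (with its labels); $g(A)$ means $g$ of the labelled graph $(V,A)$. *)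

From mathcomp Require Import all_boot.
Set Implicit Arguments.
Unset Strict Implicit.
Unset Printing Implicit Defensive.

(* A labelled (multi)graph: vertex finType V, edge finType E, each edge e has
   endpoints (ends e).1, (ends e).2 and a letter lab e : bool
   (true = o, false = s). *)

Definition deg (V E : finType) (ends : E -> V * V) (v : V) : nat :=
  #|[set e | (ends e).1 == v]| + #|[set e | (ends e).2 == v]|.

(* A factorientation is x : {ffun E -> bool}: for an o-edge e, x e = true
   means e is oriented towards (ends e).2, false towards (ends e).1;
   for an s-edge e, x e = true means e is selected. *)
Definition mixdeg (V E : finType) (ends : E -> V * V) (lab : E -> bool)
    (x : {ffun E -> bool}) (v : V) : nat :=
  #|[set e | lab e && (if x e then (ends e).2 == v else (ends e).1 == v)]|
  + #|[set e | ~~ lab e && x e && (((ends e).1 == v) || ((ends e).2 == v))]|.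

Definition balanced (V E : finType) (ends : E -> V * V) (lab : E -> bool)
    (x : {ffun E -> bool}) : bool :=
  [forall v, (mixdeg ends lab x v).*2 == deg ends v].

Definition g (V E : finType) (ends : E -> V * V) (lab : E -> bool) : nat :=
  #|[set x : {ffun E -> bool} | balanced ends lab x]|.

Definition sub_ends (V E : finType) (ends : E -> V * V) (A : {set E})
  : {e : E | e \in A} -> V * V := fun e => ends (sval e).
Definition sub_lab (E : finType) (lab : E -> bool) (A : {set E})
  : {e : E | e \in A} -> bool := fun e => lab (sval e).

(* signs: sgn e = true means +, false means - *)
(* the 2-cover H: vertices V * bool, edges E * bool; the edge (e,b) over e
   with ends u v joins (u,b) to (v,b) if sign +, and (u,b) to (v,~~b) if - *)
Definition cover_ends (V E : finType) (ends : E -> V * V) (sgn : E -> bool)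
  : E * bool -> (V * bool) * (V * bool) :=
  fun eb => (((ends eb.1).1, eb.2),
             ((ends eb.1).2, if sgn eb.1 then eb.2 else ~~ eb.2)).
Definition cover_lab (E : finType) (lab : E -> bool) : E * bool -> bool :=
  fun eb => lab eb.1.

Definition bar_lab (E : finType) (sgn lab : E -> bool) : E -> bool :=
  fun e => if sgn e then lab e else ~~ lab e.

Arguments sub_ends {V E} ends A _.
Arguments sub_lab {E} lab A _.

(* A factorientation x of the cover H is recorded by the set A of edges whose
   two lifts carry the same value, together with r : E -> bool giving the value
   on the lift of e in sheet [sgn e]; off A the other lift carries the opposite
   value ([cover_fact]).  For a vertex v let m_A, d_A be its mixed degree and
   degree in (V, A) under r, and m_B, d_B those in the barred graph on E \ A.
   Both copies of v in H have degree d_A + d_B, and their mixed degrees are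
   m_A + m_B in sheet [true] and m_A + d_B - m_B in sheet [false], so x is
   balanced at both copies iff 2 m_A = d_A and 2 m_B = d_B.  Looplessness is
   needed since a selected s-loop counts once in the mixed degree but twice in
   the degree. *)

From mathcomp Require Import all_boot zify.
Set Implicit Arguments. Unset Strict Implicit. Unset Printing Implicit Defensive.

Lemma card_set_sum (T : finType) (P : pred T) :
  #|[set x | P x]| = \sum_x (P x : nat).
Proof. by rewrite -sum1dep_card big_mkcond; apply: eq_bigr => x _; case: (P x). Qed.

Lemma sum_pair (T1 T2 : finType) (F : T1 * T2 -> nat) :
  \sum_p F p = \sum_i \sum_j F (i, j).
Proof. by rewrite pair_big; apply: eq_bigr => -[]. Qed.

Lemma big_setC_if (R : Type) (idx : R) (op : Monoid.com_law idx) (E : finType)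
    (A : {set E}) (F G : E -> R) :
  op (\big[op/idx]_(e in A) F e) (\big[op/idx]_(e in ~: A) G e)
  = \big[op/idx]_e (if e \in A then F e else G e).
Proof.
rewrite [RHS](bigID (mem A)) /=; congr (op _ _); apply: eq_big => e //=.
- by move->.
- by rewrite inE.
- by rewrite inE => /negbTE ->.
Qed.

Section Restriction.
Variables (E : finType) (A : {set E}).

Definition restr (B : {set E}) (r : {ffun E -> bool}) : {ffun {e | e \in B} -> bool} :=
  [ffun e => r (val e)].

Definition glue (y : {ffun {e | e \in A} -> bool}) (z : {ffun {e | e \in ~: A} -> bool})
  : {ffun E -> bool} :=
  [ffun e => if insub e is Some a then y a
             else if insub e is Some b then z b else false].

Lemma notin_setC_val (e : {e | e \in ~: A}) : val e \notin A.
Proof. by rewrite -in_setC (valP e). Qed.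

Lemma restr_glue y z : restr A (glue y z) = y.
Proof. by apply/ffunP => e; rewrite !ffunE valK. Qed.

Lemma restrC_glue y z : restr (~: A) (glue y z) = z.
Proof. by apply/ffunP => e; rewrite !ffunE insubN ?notin_setC_val // valK. Qed.

Lemma glue_restr r : glue (restr A r) (restr (~: A) r) = r.
Proof.
apply/ffunP => e; rewrite !ffunE.
case: insubP => [a _ <- | eNA]; first by rewrite ffunE.
by rewrite insubT ?inE // => b; rewrite ffunE.
Qed.

Lemma sum_restr_split (P : pred {ffun {e | e \in A} -> bool})
    (Q : pred {ffun {e | e \in ~: A} -> bool}) :
  \sum_r (P (restr A r) && Q (restr (~: A) r) : nat)
  = #|[set y | P y]| * #|[set z | Q z]|.
Proof.
have glue_bij : bijective (fun yz => glue yz.1 yz.2).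
  exists (fun r => (restr A r, restr (~: A) r)) => [[y z]|r] /=.
    by rewrite restr_glue restrC_glue.
  exact: glue_restr.
rewrite !card_set_sum big_distrl (reindex _ (onW_bij _ glue_bij)) /= sum_pair.
apply: eq_bigr => y _; rewrite big_distrr; apply: eq_bigr => z _ /=.
by rewrite restr_glue restrC_glue; case: (P y); case: (Q z).
Qed.

End Restriction.

Definition mixcontr (V : eqType) (p : V * V) (l b : bool) (v : V) : bool :=
  if l then (if b then p.2 == v else p.1 == v)
  else b && ((p.1 == v) || (p.2 == v)).

Definition endcount (V : eqType) (p : V * V) (v : V) : nat :=
  (p.1 == v) + (p.2 == v).

Section EdgeSums.
Variables (V E : finType) (ends : E -> V * V).

Lemma mixdegE lab x v :
  mixdeg ends lab x v = \sum_e (mixcontr (ends e) (lab e) (x e) v : nat).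
Proof.
rewrite /mixdeg !card_set_sum -big_split /=.
by apply: eq_bigr => e _; rewrite /mixcontr; case: (lab e); case: (x e); rewrite /= ?addn0.
Qed.

Lemma degE v : deg ends v = \sum_e endcount (ends e) v.
Proof. by rewrite /deg !card_set_sum -big_split. Qed.

End EdgeSums.

Section SubgraphDegrees.
Variables (V E : finType) (ends : E -> V * V).

Lemma mixdeg_sub lab (A : {set E}) r v :
  mixdeg (sub_ends ends A) (sub_lab lab A) (restr A r) v
  = \sum_(e in A) (mixcontr (ends e) (lab e) (r e) v : nat).
Proof. by rewrite mixdegE [RHS]big_sub; apply: eq_bigr => e _; rewrite ffunE. Qed.

Lemma deg_sub (A : {set E}) v :
  deg (sub_ends ends A) v = \sum_(e in A) endcount (ends e) v.
Proof. by rewrite degE [RHS]big_sub. Qed.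

Lemma deg_sub_setC (A : {set E}) v :
  deg ends v = deg (sub_ends ends A) v + deg (sub_ends ends (~: A)) v.
Proof.
by rewrite degE !deg_sub big_setC_if; apply: eq_bigr => e _; case: ifP.
Qed.

Variable sgn : E -> bool.

Lemma deg_cover v c : deg (cover_ends ends sgn) (v, c) = deg ends v.
Proof.
rewrite !degE sum_pair; apply: eq_bigr => e _; rewrite big_bool /endcount /cover_ends /=.
rewrite !xpair_eqE.
by case: (sgn e); case: c; case: ((ends e).1 == v); case: ((ends e).2 == v).
Qed.

Lemma mixdeg_cover lab x v c :
  mixdeg (cover_ends ends sgn) (cover_lab lab) x (v, c)
  = \sum_e \sum_b (mixcontr (cover_ends ends sgn (e, b)) (lab e) (x (e, b)) (v, c) : nat).
Proof. by rewrite mixdegE sum_pair. Qed.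

End SubgraphDegrees.

Definition cover_fact (E : finType) (sgn : E -> bool) (p : {set E} * {ffun E -> bool})
  : {ffun E * bool -> bool} :=
  [ffun eb => if eb.1 \in p.1 then p.2 eb.1 else (eb.2 == sgn eb.1) == p.2 eb.1].

Lemma cover_fact_bij (E : finType) (sgn : E -> bool) : bijective (cover_fact sgn).
Proof.
pose unfact (x : {ffun E * bool -> bool}) :=
  ([set e | x (e, true) == x (e, false)], [ffun e => x (e, sgn e)]).
exists unfact => [[A r] | x]; rewrite /unfact.
  congr pair; [apply/setP => e | apply/ffunP => e]; rewrite !(inE, ffunE) /=.
    by case: (e \in A); rewrite ?eqxx //; case: (sgn e); case: (r e).
  by case: (e \in A); rewrite ?eqxx.
apply/ffunP => -[e b]; rewrite !(inE, ffunE) /=.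
by case: b; case: (sgn e); case: (x (e, true)); case: (x (e, false)).
Qed.

Lemma balance_split (a b h da db : nat) : h + b = a + db ->
  ((a + b).*2 == da + db) && (h.*2 == da + db) = (a.*2 == da) && (b.*2 == db).
Proof. by move=> hE; apply/andP/andP => -[/eqP h1 /eqP h2]; split; apply/eqP; lia. Qed.

Section CoverBalance.
Variables (V E : finType) (ends : E -> V * V) (sgn lab : E -> bool).
Hypothesis loopless : forall e, (ends e).1 != (ends e).2.
Variables (A : {set E}) (r : {ffun E -> bool}).

Let x := cover_fact sgn (A, r).
Let lift_contr e v c : nat :=
  \sum_b (mixcontr (cover_ends ends sgn (e, b)) (lab e) (x (e, b)) (v, c) : nat).

Lemma not_both_ends e v : ~~ (((ends e).1 == v) && ((ends e).2 == v)).
Proof. by apply: contra (loopless e) => /andP[/eqP -> /eqP ->]. Qed.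

Lemma lift_contr_in e v c : e \in A -> lift_contr e v c = mixcontr (ends e) (lab e) (r e) v.
Proof.
move=> eA; move: (not_both_ends e v).
rewrite /lift_contr big_bool /x /mixcontr /cover_ends !ffunE /= eA !xpair_eqE.
by case: ((ends e).1 == v); case: ((ends e).2 == v);
  case: (sgn e); case: (lab e); case: (r e); case: c.
Qed.

Lemma lift_contr_out_true e v : e \notin A ->
  lift_contr e v true = mixcontr (ends e) (bar_lab sgn lab e) (r e) v.
Proof.
move=> /negbTE eNA; move: (not_both_ends e v).
rewrite /lift_contr big_bool /x /mixcontr /cover_ends /bar_lab !ffunE /= eNA !xpair_eqE.
by case: ((ends e).1 == v); case: ((ends e).2 == v); case: (sgn e); case: (lab e); case: (r e).
Qed.

Lemma lift_contr_out_false e v : e \notin A ->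
  lift_contr e v false + mixcontr (ends e) (bar_lab sgn lab e) (r e) v = endcount (ends e) v.
Proof.
move=> /negbTE eNA; move: (not_both_ends e v).
rewrite /lift_contr big_bool /x /mixcontr /cover_ends /bar_lab /endcount !ffunE /= eNA.
rewrite !xpair_eqE.
by case: ((ends e).1 == v); case: ((ends e).2 == v); case: (sgn e); case: (lab e); case: (r e).
Qed.

Local Notation mixH := (mixdeg (cover_ends ends sgn) (cover_lab lab) x).
Local Notation mixA := (mixdeg (sub_ends ends A) (sub_lab lab A) (restr A r)).
Local Notation mixB :=
  (mixdeg (sub_ends ends (~: A)) (sub_lab (bar_lab sgn lab) (~: A)) (restr (~: A) r)).
Local Notation degA := (deg (sub_ends ends A)).
Local Notation degB := (deg (sub_ends ends (~: A))).

Lemma mixdeg_cover_true v : mixH (v, true) = mixA v + mixB v.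
Proof.
rewrite mixdeg_cover !mixdeg_sub big_setC_if; apply: eq_bigr => e _.
case: (boolP (e \in A)) => [eA | eNA].
  exact: lift_contr_in.
exact: lift_contr_out_true.
Qed.

Lemma mixdeg_cover_false v : mixH (v, false) + mixB v = mixA v + degB v.
Proof.
rewrite mixdeg_cover !mixdeg_sub deg_sub big_setC_if [X in _ + X]big_mkcond -big_split.
apply: eq_bigr => e _; rewrite inE.
case: (boolP (e \in A)) => [eA | eNA] /=.
  by rewrite addn0; apply: lift_contr_in.
exact: lift_contr_out_false.
Qed.

Lemma balanced_cover_at v :
  ((mixH (v, true)).*2 == deg (cover_ends ends sgn) (v, true))
  && ((mixH (v, false)).*2 == deg (cover_ends ends sgn) (v, false))
  = ((mixA v).*2 == degA v) && ((mixB v).*2 == degB v).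
Proof.
rewrite !deg_cover (deg_sub_setC ends A) mixdeg_cover_true.
exact: balance_split (mixdeg_cover_false v).
Qed.

Lemma balanced_cover_fact :
  balanced (cover_ends ends sgn) (cover_lab lab) x
  = balanced (sub_ends ends A) (sub_lab lab A) (restr A r)
    && balanced (sub_ends ends (~: A)) (sub_lab (bar_lab sgn lab) (~: A)) (restr (~: A) r).
Proof.
apply/forallP/andP => [bal | [/forallP balA /forallP balB] [v c]].
  by split; apply/forallP => v; have := balanced_cover_at v; rewrite !bal => /esym/andP[].
by have := balanced_cover_at v; rewrite balA balB; case: c => /andP[].
Qed.

End CoverBalance.

Theorem theorem1p9 (V E : finType) (ends : E -> V * V) (sgn lab : E -> bool)
  (loopless : forall e, (ends e).1 != (ends e).2) :
  g (cover_ends ends sgn) (cover_lab lab) =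
  \sum_(A : {set E})
     g (sub_ends ends A) (sub_lab lab A)
     * g (sub_ends ends (~: A)) (sub_lab (bar_lab sgn lab) (~: A)).
Proof.
rewrite /g card_set_sum (reindex _ (onW_bij _ (cover_fact_bij sgn))) sum_pair.
apply: eq_bigr => A _; rewrite -sum_restr_split.
by apply: eq_bigr => r _; rewrite (balanced_cover_fact _ _ loopless).
Qed.
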